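(* Let $N\ge1$ be an integer, $0<\lambda<1$ and $\lambda^N\le\delta\le1$, and put $k_+=\lceil\log_\lambda\delta\rceil$, $k_-=\lfloor\log_\lambda\delta\rfloor$. Then $$\frac{(N-k_+)\lambda}{k_++(N-k_+)\lambda}\le F(N,\delta,\lambda)\le\frac{(N-k_-)\lambda}{k_-+(N-k_-)\lambda}.$$
   Context: Let $\mathcal H$ be a Hilbert space of finite dimension $D\ge 2$ and $|\Psi\rangle\in\mathcal H$ a unit vector. For $0\le\lambda<1$ let $\Omega_\lambda=|\Psi\rangle\langle\Psi|+\lambda(1-|\Psi\rangle\langle\Psi|)$. For a density operator $\rho$ on $\mathcal H^{\otimes(N+1)}$ put $p_\rho=\mathrm{tr}[(\Omega_\lambda^{\otimes N}\otimes 1)\rho]$ and $f_\rho=\mathrm{tr}[(\Omega_\lambda^{\otimes N}\otimes|\Psi\rangle\langle\Psi|)\rho]$, and $F(N,\delta,\lambda)=\min\{f_\rho/p_\rho:p_\rho\ge\delta\}$, the minimum over permutation-invariant density operators on $\mathcal H^{\otimes(N+1)}$. *)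

From HB Require Import structures.
From mathcomp Require Import all_boot all_order all_algebra all_fingroup.
From mathcomp Require Import reals exp.
From mathcomp Require Import complex mxtens.
Set Implicit Arguments. Unset Strict Implicit. Unset Printing Implicit Defensive.
Import Order.TTheory GRing.Theory Num.Theory.
Local Open Scope ring_scope.
Local Open Scope complex_scope.

Section QDefs.
Variable R : realType.
Local Notation C := R[i].

Definition adj {m n} (A : 'M[C]_(m, n)) : 'M[C]_(n, m) := map_mx conjc A^T.

(* positive semidefinite: <v, A v> >= 0 in C (i.e. is a nonnegative real) *)
Definition psd {n} (A : 'M[C]_n) : Prop :=
  forall v : 'cV[C]_n, 0 <= (adj v *m A *m v) 0 0.

Definition density {n} (rho : 'M[C]_n) : Prop :=
  adj rho = rho /\ psd rho /\ \tr rho = 1.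

Variables (D N : nat).
(* H^{(N+1)} is C^(D^N * D), with the standard basis e_{d_0} (x) ... (x) e_{d_N}
   (ordered as in mxtens: first factor most significant), index
   sum_j d_j * D^(N - j). *)
Definition digit (j : 'I_N.+1) (x : nat) : nat := (x %/ D ^ (N - j)) %% D.

(* Permutation operator P_sigma: e_{(d_l)_l} |-> e_{(d_(sigma l))_l} *)
Definition perm_op (s : {perm 'I_N.+1}) : 'M[C]_(D ^ N * D) :=
  \matrix_(x, y) ((nat_of_ord x ==
      \sum_(l < N.+1) digit (s l) y * D ^ (N - l))%N)%:R.

Definition perm_invariant (rho : 'M[C]_(D ^ N * D)) : Prop :=
  forall s : {perm 'I_N.+1}, perm_op s *m rho = rho *m perm_op s.

Variable Psi : 'cV[C]_D.
Definition projPsi : 'M[C]_D := Psi *m adj Psi.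
Definition Omega (lam : R) : 'M[C]_D := projPsi + lam%:C *: (1 - projPsi).

Definition p_of (lam : R) (rho : 'M[C]_(D ^ N * D)) : C :=
  \tr ((ntensmx (Omega lam) N *t (1 : 'M[C]_D)) *m rho).
Definition f_of (lam : R) (rho : 'M[C]_(D ^ N * D)) : C :=
  \tr ((ntensmx (Omega lam) N *t projPsi) *m rho).

Definition feasible (delta lam : R) (rho : 'M[C]_(D ^ N * D)) : Prop :=
  density rho /\ perm_invariant rho /\ delta%:C <= p_of lam rho.

Definition is_F (delta lam : R) (x : C) : Prop :=
  (exists rho, feasible delta lam rho /\ f_of lam rho / p_of lam rho = x) /\
  (forall rho, feasible delta lam rho -> x <= f_of lam rho / p_of lam rho).
End QDefs.

From HB Require Import structures.
From mathcomp Require Import all_boot all_order all_algebra all_fingroup.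
From mathcomp Require Import reals exp.
From mathcomp Require Import complex mxtens.
From mathcomp Require Import ring lra.
Set Implicit Arguments. Unset Strict Implicit. Unset Printing Implicit Defensive.
Import Order.TTheory GRing.Theory Num.Theory.

(* Split every tensor factor along [Psi] and its orthogonal complement.  The
   resulting product projectors [patproj f] turn [p_rho] and [f_rho] into linear
   functions of the probability weights [tr (patproj f rho)], and permutation
   invariance lets one average over the position of the last factor: [(N+1) lam p]
   and [(N+1) lam f] are the expectations of [plevel k] and [flevel k], where [k]
   counts the factors orthogonal to [Psi].  Conversely every distribution of [k]
   comes from a permutation-invariant state.  The points [(plevel k, flevel k)]
   form a convex chain, so under the constraint [p >= delta] the minimal ratio is
   attained by mixing two consecutive levels with [p = delta], and the chord
   through them is a supporting line certifying optimality.  Mixing levels [k]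
   and [k + 1] so that [p = lam ^ k] gives the ratio [(N - k) lam / (k + (N - k) lam)];
   comparing with [lam ^ kp <= delta <= lam ^ km] yields the two bounds. *)

Section Digits.
Variable D : nat.
Hypothesis D_gt0 : (0 < D)%N.

Definition undigits (n : nat) (t : nat -> nat) : nat :=
  \sum_(l < n.+1) t l * D ^ (n - l).

Lemma undigitsS n t : undigits n.+1 t = undigits n t * D + t n.+1.
Proof.
rewrite /undigits big_ord_recr /= subnn expn0 muln1; congr (_ + _).
rewrite big_distrl /=; apply: eq_bigr => l _ /=.
by rewrite -mulnA -expnSr subSn // -ltnS.
Qed.

Lemma undigits_lt n t : (forall l, l <= n -> t l < D) -> undigits n t < D ^ n.+1.
Proof.
elim: n t => [|n IH] t t_lt.
  by rewrite /undigits big_ord1 subnn expn0 muln1 expn1 t_lt.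
rewrite undigitsS expnSr.
have lt_n : undigits n t < D ^ n.+1.
  by apply: IH => l hl; apply: t_lt; rewrite (leq_trans hl).
apply: (@leq_trans ((undigits n t).+1 * D)); first by rewrite mulSn addnC ltn_add2r t_lt.
by rewrite leq_mul2r lt_n orbT.
Qed.

Lemma undigitsK n x :
  x < D ^ n.+1 -> undigits n (fun l => (x %/ D ^ (n - l)) %% D) = x.
Proof.
elim: n x => [|n IH] x lt_x.
  by rewrite /undigits big_ord1 subnn expn0 muln1 divn1 modn_small // -(expn1 D).
rewrite undigitsS subnn expn0 divn1.
have -> : undigits n (fun l => x %/ D ^ (n.+1 - l) %% D) =
          undigits n (fun l => (x %/ D) %/ D ^ (n - l) %% D).
  by apply: eq_bigr => l _; rewrite -divnMA -expnS subSn // -ltnS.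
by rewrite IH -?divn_eq // ltn_divLR // -expnSr.
Qed.

Lemma undigits_digit n t j : (forall l, l <= n -> t l < D) -> j <= n ->
  (undigits n t %/ D ^ (n - j)) %% D = t j.
Proof.
elim: n t j => [|n IH] t j t_lt le_jn.
  move: le_jn; rewrite leqn0 => /eqP ->.
  by rewrite /undigits big_ord1 subnn expn0 muln1 divn1 modn_small // t_lt.
rewrite undigitsS; have [lt_jn|] := ltnP j n.+1; last first.
  move=> le_nj; have -> : j = n.+1 by apply/eqP; rewrite eqn_leq le_jn le_nj.
  by rewrite subnn expn0 divn1 modnMDl modn_small // t_lt.
rewrite subSn // expnS divnMA divnMDl // (divn_small (t_lt _ (leqnn _))) addn0.
by apply: IH => // l hl; apply: t_lt; rewrite (leq_trans hl).
Qed.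

Lemma digit_modn k i x : i <= k ->
  ((x %% D ^ k.+1) %/ D ^ (k - i)) %% D = (x %/ D ^ (k - i)) %% D.
Proof.
move=> le_ik; have -> : D ^ k.+1 = D ^ i.+1 * D ^ (k - i) by rewrite -expnD addSn subnKC.
by rewrite -modn_divl modn_dvdm // dvdn_exp.
Qed.

End Digits.

Lemma sum_ord_lt m j : (j <= m)%N -> (\sum_(i < m) (i < j : nat))%N = j.
Proof.
elim: m j => [|m IH] j le_jm; first by move: le_jm; rewrite leqn0 big_ord0 => /eqP ->.
rewrite big_ord_recr /=; case: (ltnP m j) => [lt_mj|le_jm']; last by rewrite IH // addn0.
have -> : j = m.+1 by apply/eqP; rewrite eqn_leq le_jm lt_mj.
rewrite addn1 (eq_bigr (fun _ => 1%N)) ?sum1_card ?card_ord // => i _.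
by rewrite /= ltnS ltnW.
Qed.

Local Open Scope ring_scope.

Section TensorProduct.
Variables (T : comPzRingType) (D : nat).
Hypothesis D_gt0 : (0 < D)%N.

Fixpoint tensprod k (A : nat -> 'M[T]_D) : 'M[T]_(D ^ k.+1) :=
  if k is k'.+1 return 'M[T]_(D ^ k.+1) then A 0%N *t tensprod k' (fun i => A i.+1)
  else A 0%N.

Definition ord_modn (x : nat) : 'I_D := Ordinal (ltn_pmod x D_gt0).

Lemma tensprodE k A (x y : 'I_(D ^ k.+1)) :
  tensprod k A x y =
  \prod_(i < k.+1) A i (ord_modn (x %/ D ^ (k - i))) (ord_modn (y %/ D ^ (k - i))).
Proof.
elim: k A x y => [|k IH] A x y.
  rewrite big_ord1 /= subnn expn0 !divn1; congr (A 0%N _ _); apply: val_inj => /=;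
  by rewrite modn_small // -(expn1 D).
rewrite /= mxE big_ord_recl /= subn0; congr (_ * _).
  have lt_x : (x < D ^ k.+2)%N := ltn_ord x.
  have lt_y : (y < D ^ k.+2)%N := ltn_ord y.
  congr (A 0%N _ _); apply: val_inj => /=;
  by rewrite modn_small // ltn_divLR ?expn_gt0 ?D_gt0 // -expnSr.
rewrite IH; apply: eq_bigr => i _ /=; rewrite subSS.
by congr (A _ _ _); apply: val_inj => /=; rewrite digit_modn // -ltnS.
Qed.

Lemma eq_tensprod k A B :
  (forall i, (i <= k)%N -> A i = B i) -> tensprod k A = tensprod k B.
Proof.
elim: k A B => [|k IH] A B eqAB /=; first by rewrite eqAB.
by rewrite eqAB // (IH (fun i => A i.+1) (fun i => B i.+1)) // => i hi; rewrite eqAB.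
Qed.

Lemma tensprod_mul k A B :
  tensprod k A *m tensprod k B = tensprod k (fun i => A i *m B i).
Proof. by elim: k A B => [|k IH] A B //=; rewrite tensmx_mul IH. Qed.

Lemma mxtrace_tensmx m n (A : 'M[T]_m) (B : 'M[T]_n) : \tr (A *t B) = \tr A * \tr B.
Proof. by rewrite /mxtrace mulr_sum; apply: eq_bigr => i _; rewrite mxE. Qed.

Lemma mxtrace_tensprod k A : \tr (tensprod k A) = \prod_(i < k.+1) \tr (A i).
Proof.
elim: k A => [|k IH] A /=; first by rewrite big_ord1.
by rewrite big_ord_recl -(IH (fun i => A i.+1)) mxtrace_tensmx.
Qed.

Lemma tensmx11 m n : (1%:M : 'M[T]_m) *t (1%:M : 'M[T]_n) = 1%:M.
Proof.
apply/matrixP=> i j.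
case: (mxtens_indexP i) => i1 i2; case: (mxtens_indexP j) => j1 j2.
rewrite tensmxE !mxE -natrM; congr (_%:R).
by symmetry; rewrite -val_eqE /= eq_addl_mul ?ltn_ord // xpair_eqE mulnb.
Qed.

Lemma tensprod1 k : tensprod k (fun _ => 1%:M) = 1%:M.
Proof. by elim: k => [|k IH] //=; rewrite IH tensmx11. Qed.

Lemma ntensmx_recE k (A : 'M[T]_D) : ntensmx_rec A k = tensprod k (fun _ => A).
Proof. by elim: k => [|k IH] //=; rewrite IH. Qed.

End TensorProduct.

Local Open Scope complex_scope.

Section Adjoint.
Variable R : realType.
Local Notation C := R[i].

Lemma adjM m n p (A : 'M[C]_(m, n)) (B : 'M[C]_(n, p)) : adj (A *m B) = adj B *m adj A.
Proof. by rewrite /adj trmx_mul map_mxM. Qed.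

Lemma adjK m n (A : 'M[C]_(m, n)) : adj (adj A) = A.
Proof. by apply/matrixP => i j; rewrite !mxE conjcK. Qed.

Lemma adjZ m n c (A : 'M[C]_(m, n)) : adj (c *: A) = c^* *: adj A.
Proof. by apply/matrixP => i j; rewrite !mxE rmorphM. Qed.

Lemma adj1 m : adj (1%:M : 'M[C]_m) = 1%:M.
Proof. by apply/matrixP => i j; rewrite !mxE conjc_nat eq_sym. Qed.

Lemma adjB m n (A B : 'M[C]_(m, n)) : adj (A - B) = adj A - adj B.
Proof. by apply/matrixP => i j; rewrite !mxE rmorphB. Qed.

Lemma adj_sum m n I (r : seq I) (F : I -> 'M[C]_(m, n)) :
  adj (\sum_(i <- r) F i) = \sum_(i <- r) adj (F i).
Proof.
apply/matrixP => i j; rewrite !mxE !summxE rmorph_sum.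
by apply: eq_bigr => k _; rewrite !mxE.
Qed.

Lemma adj_tensmx m n p q (A : 'M[C]_(m, n)) (B : 'M[C]_(p, q)) :
  adj (A *t B) = adj A *t adj B.
Proof. by rewrite /adj trmx_tens map_mxT. Qed.

Lemma adj_tensprod D k (A : nat -> 'M[C]_D) :
  adj (tensprod k A) = tensprod k (fun i => adj (A i)).
Proof. by elim: k A => [|k IH] A //=; rewrite -IH adj_tensmx. Qed.

Lemma adj_mul_self_ge0 m (u : 'cV[C]_m) : 0 <= (adj u *m u) 0 0.
Proof.
rewrite !mxE; apply: sumr_ge0 => a _; rewrite !mxE mulrC; exact: mulcJ_ge0.
Qed.

Lemma psd_mxtrace_conj m k (B : 'M[C]_(k, m)) (M : 'M[C]_k) :
  psd M -> 0 <= \tr (adj B *m M *m B).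
Proof.
move=> psdM; apply: sumr_ge0 => x _.
have -> : (adj B *m M *m B) x x = (adj (col x B) *m M *m col x B) 0 0.
  rewrite !mxE; apply: eq_bigr => b _; rewrite !mxE; congr (_ * _).
  by apply: eq_bigr => a _; rewrite !mxE.
exact: psdM.
Qed.

End Adjoint.

Section SymmetricSums.
Variables (T : pzRingType) (m : nat).
Local Notation pattern := {ffun 'I_m -> bool}.
Implicit Types f : pattern.

Definition nperp f : nat := \sum_(i < m) f i.

Lemma nperp_perm (s : {perm 'I_m}) f : nperp [ffun i => f (s i)] = nperp f.
Proof.
rewrite /nperp [RHS](reindex_inj (@perm_inj _ s)) /=.
by apply: eq_bigr => i _; rewrite ffunE.
Qed.

Lemma sum_site_symmetric (w : pattern -> T) (G : nat -> T) (i0 : 'I_m) :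
  (forall (s : {perm 'I_m}) f, w [ffun i => f (s i)] = w f) ->
  m%:R * \sum_(f : pattern) (f i0)%:R * G (nperp f) * w f =
  \sum_(f : pattern) (nperp f)%:R * G (nperp f) * w f.
Proof.
move=> w_sym.
have site_i0 i : \sum_(f : pattern) (f i)%:R * G (nperp f) * w f =
                 \sum_(f : pattern) (f i0)%:R * G (nperp f) * w f.
  pose t := tperm i i0.
  have t_inj : injective (fun f : pattern => [ffun j => f (t j)]).
    by move=> f g /ffunP eq_fg; apply/ffunP => j; have := eq_fg (t j); rewrite !ffunE tpermK.
  rewrite (reindex_inj t_inj) /=; apply: eq_bigr => f _.
  by rewrite ffunE tpermL nperp_perm w_sym.
transitivity (\sum_(i < m) \sum_(f : pattern) (f i)%:R * G (nperp f) * w f).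
  by rewrite (eq_bigr _ (fun i _ => site_i0 i)) sumr_const card_ord mulr_natl.
by rewrite exchange_big /=; apply: eq_bigr => f _; rewrite /nperp natr_sum !mulr_suml.
Qed.

End SymmetricSums.

(* For a pattern with [k] of its [M] sites orthogonal to [Psi]: [M] times the
   average, over the choice of the last site, of [x ^ (1 + j)] with [j] the number
   of other orthogonal sites (resp. of [x ^ (k + 1)] if the last site is along [Psi]
   and [0] otherwise). *)
Definition plevel (T : pzRingType) (M : nat) (x : T) (k : nat) : T :=
  (M%:R - k%:R) * x ^+ k.+1 + k%:R * x ^+ k.
Definition flevel (T : pzRingType) (M : nat) (x : T) (k : nat) : T :=
  (M%:R - k%:R) * x ^+ k.+1.

Lemma rmorph_plevel (T U : pzRingType) (phi : {rmorphism T -> U}) M x k :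
  phi (plevel M x k) = plevel M (phi x) k.
Proof. by rewrite /plevel rmorphD !rmorphM rmorphB !rmorph_nat !rmorphXn. Qed.

Lemma rmorph_flevel (T U : pzRingType) (phi : {rmorphism T -> U}) M x k :
  phi (flevel M x k) = flevel M (phi x) k.
Proof. by rewrite /flevel rmorphM rmorphB !rmorph_nat rmorphXn. Qed.

Section Sites.
Variable R : realType.
Local Notation C := R[i].
Variable D : nat.
Hypothesis D_gt0 : (0 < D)%N.
Variable n : nat.
Local Notation N := n.+1.
Local Notation ord_modn := (ord_modn D_gt0).
Local Notation M := 'M[C]_(D ^ N * D).
Local Notation perm_op := (@perm_op R D N).

(* The last factor is split off to match the shape [D ^ N * D] of the statement. *)
Definition siteprod (A : 'I_N.+1 -> 'M[C]_D) : M :=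
  tensprod n (fun i => A (inord i)) *t A ord_max.

Lemma siteprodE A (x y : 'I_(D ^ N * D)) :
  siteprod A x y = \prod_(i < N.+1)
    A i (ord_modn (x %/ D ^ (N - i))) (ord_modn (y %/ D ^ (N - i))).
Proof.
rewrite /siteprod mxE tensprodE [in RHS]big_ord_recr /=; congr (_ * _).
  apply: eq_bigr => i _; have le_in : (i <= n)%N by rewrite -ltnS.
  have -> : inord i = widen_ord (leqnSn N) i.
    by apply: val_inj; rewrite /= inordK // ltnS ltnW.
  by congr (A _ _ _); apply: val_inj => /=; rewrite subSn // -divnMA -expnS.
by rewrite subnn expn0 !divn1; congr (A _ _ _); apply: val_inj.
Qed.

Lemma eq_siteprod A B : A =1 B -> siteprod A = siteprod B.
Proof.
by move=> eqAB; apply/matrixP => x y; rewrite !siteprodE; apply: eq_bigr => i _; rewrite eqAB.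
Qed.

Lemma siteprod_mul A B : siteprod A *m siteprod B = siteprod (fun i => A i *m B i).
Proof. by rewrite /siteprod tensmx_mul tensprod_mul. Qed.

Lemma adj_siteprod A : adj (siteprod A) = siteprod (fun i => adj (A i)).
Proof. by rewrite /siteprod adj_tensmx adj_tensprod. Qed.

Lemma mxtrace_siteprod A : \tr (siteprod A) = \prod_(i < N.+1) \tr (A i).
Proof.
rewrite /siteprod mxtrace_tensmx mxtrace_tensprod [in RHS]big_ord_recr /=.
congr (_ * _); apply: eq_bigr => i _; congr (\tr (A _)).
by apply: val_inj; rewrite /= inordK // ltnS ltnW.
Qed.

Lemma siteprod1 : siteprod (fun _ => 1%:M) = 1%:M.
Proof. by rewrite /siteprod tensprod1 tensmx11. Qed.

Lemma siteprod_eq0 A i : A i = 0 -> siteprod A = 0.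
Proof.
by move=> Ai0; apply/matrixP => x y; rewrite siteprodE mxE (bigD1 i) //= Ai0 mxE mul0r.
Qed.

Lemma ntensmx_siteprod (A B : 'M[C]_D) :
  ntensmx A N *t B = siteprod (fun i => if i == ord_max then B else A).
Proof.
rewrite /siteprod eqxx -[ntensmx A N]/(ntensmx_rec A n) ntensmx_recE.
congr (_ *t _); apply: eq_tensprod => i le_in.
suff /negbTE -> : inord i != ord_max :> 'I_N.+1 by [].
by rewrite -val_eqE /= inordK ?ltnS ?(leq_trans le_in) // neq_ltn ltnS le_in.
Qed.

Section Permutations.
Variable s : {perm 'I_N.+1}.

Fact perm_index_subproof (y : 'I_(D ^ N * D)) :
  (undigits D N (fun l => digit D (s (inord l)) y) < D ^ N * D)%N.
Proof.
apply: leq_trans (undigits_lt _) _ => [l _|]; first exact: ltn_pmod.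
by rewrite expnSr.
Qed.

(* [perm_index y] is the row of the unique nonzero entry in column [y] of [perm_op s]. *)
Definition perm_index y : 'I_(D ^ N * D) := Ordinal (perm_index_subproof y).

Lemma perm_opE x y : perm_op s x y = (x == perm_index y)%:R.
Proof.
rewrite mxE; congr ((x == _ :> nat)%:R).
by rewrite /= /undigits; apply: eq_bigr => l _; rewrite inord_val.
Qed.

Lemma digit_perm_index y (i : 'I_N.+1) :
  (perm_index y %/ D ^ (N - i) %% D = y %/ D ^ (N - s i) %% D)%N.
Proof.
rewrite /= undigits_digit ?inord_val // => [l _|]; first exact: ltn_pmod.
by rewrite -ltnS.
Qed.

End Permutations.

Lemma perm_indexK s : cancel (perm_index (s^-1)%g) (perm_index s).
Proof.
move=> x; apply: val_inj => /=.
have lt_x : (x < D ^ N.+1)%N by rewrite [X in (_ < X)%N]expnSr ltn_ord.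
rewrite -[RHS](undigitsK D_gt0 lt_x).
by apply: eq_bigr => l _; rewrite /digit digit_perm_index permK inord_val.
Qed.

Lemma sum_delta m (a : 'I_m) (F : 'I_m -> C) : \sum_y (y == a)%:R * F y = F a.
Proof.
rewrite (bigD1 a) //= eqxx mul1r big1 ?addr0 // => y /negbTE ->; exact: mul0r.
Qed.

Lemma perm_op_conjE s (A : M) x z :
  ((perm_op s)^T *m A *m perm_op s) x z = A (perm_index s x) (perm_index s z).
Proof.
rewrite mxE; under eq_bigr => w _ do rewrite perm_opE mulrC.
rewrite sum_delta mxE; under eq_bigr => y _ do rewrite mxE perm_opE.
exact: sum_delta.
Qed.

Lemma perm_op_conj_siteprod s A :
  (perm_op s)^T *m siteprod A *m perm_op s = siteprod (fun i => A ((s^-1)%g i)).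
Proof.
apply/matrixP => x z; rewrite perm_op_conjE !siteprodE.
rewrite [RHS](reindex_inj (@perm_inj _ s)) /=; apply: eq_bigr => i _.
by rewrite permK; congr (A i _ _); apply: val_inj; rewrite /= digit_perm_index.
Qed.

Lemma perm_op_trmx s : perm_op s *m (perm_op s)^T = 1%:M.
Proof.
apply/matrixP => x z; rewrite mxE.
under eq_bigr => y _ do rewrite [(_^T) _ _]mxE !perm_opE.
rewrite (bigD1 (perm_index (s^-1)%g x)) //= perm_indexK eqxx mul1r big1 ?addr0.
  by rewrite mxE eq_sym.
move=> y ne_y; case: eqP => [x_y|]; last by rewrite mul0r.
have := perm_indexK (s^-1)%g y; rewrite invgK => yK.
by move: ne_y; rewrite x_y yK eqxx.
Qed.

Lemma siteprod_perm_op s A :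
  siteprod A *m perm_op s = perm_op s *m siteprod (fun i => A ((s^-1)%g i)).
Proof. by rewrite -perm_op_conj_siteprod !mulmxA perm_op_trmx mul1mx. Qed.


Section Patterns.
Variable Psi : 'cV[C]_D.
Hypothesis Psi_unit : adj Psi *m Psi = 1.
Local Notation P := (projPsi Psi).
Local Notation pattern := {ffun 'I_N.+1 -> bool}.
Implicit Types (s : {perm 'I_N.+1}) (f g : pattern) (rho : 'M[C]_(D ^ N * D)).

Lemma projPsi_idem : P *m P = P.
Proof. by rewrite /projPsi mulmxA -(mulmxA Psi) Psi_unit mulmx1. Qed.

Lemma adj_projPsi : adj P = P.
Proof. by rewrite /projPsi adjM adjK. Qed.

Lemma mxtrace_projPsi : \tr P = 1.
Proof. by rewrite /projPsi mxtrace_mulC Psi_unit mxtrace1. Qed.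

Definition siteproj (b : bool) : 'M[C]_D := if b then 1%:M - P else P.

Lemma siteproj_mul b c : siteproj b *m siteproj c = if b == c then siteproj b else 0.
Proof.
case: b; case: c; rewrite /= ?mulmxBl ?mulmxBr ?mul1mx ?mulmx1 projPsi_idem ?subrr //.
by rewrite subr0.
Qed.

Lemma adj_siteproj b : adj (siteproj b) = siteproj b.
Proof. by case: b; rewrite /= ?adjB ?adj1 adj_projPsi. Qed.

Lemma mxtrace_siteproj b : \tr (siteproj b) = if b then D%:R - 1 else 1.
Proof. by case: b; rewrite /= ?raddfB /= ?mxtrace1 mxtrace_projPsi. Qed.

Lemma siteprojE (c : bool -> C) : c false *: P + c true *: (1%:M - P) =
  \sum_(b : bool) c b *: siteproj b.
Proof. by rewrite big_bool addrC. Qed.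

Definition patproj f : 'M[C]_(D ^ N * D) := siteprod (fun i => siteproj (f i)).

Lemma patproj_mul f g : patproj f *m patproj g = if f == g then patproj f else 0.
Proof.
rewrite /patproj siteprod_mul; case: eqP => [<-|ne_fg].
  by apply: eq_siteprod => i; rewrite siteproj_mul eqxx.
have [i ne_i|eq_fg] := pickP (fun i => f i != g i).
  by apply: (siteprod_eq0 (i := i)); rewrite siteproj_mul (negbTE ne_i).
by case: ne_fg; apply/ffunP => i; move: (eq_fg i) => /negbFE /eqP.
Qed.

Lemma patproj_idem f : patproj f *m patproj f = patproj f.
Proof. by rewrite patproj_mul eqxx. Qed.

Lemma adj_patproj f : adj (patproj f) = patproj f.
Proof. by rewrite /patproj adj_siteprod; apply: eq_siteprod => i; rewrite adj_siteproj. Qed.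

Definition ptrace f : R := \prod_(i < N.+1) (if f i then D%:R - 1 else 1).

Lemma mxtrace_patproj f : \tr (patproj f) = (ptrace f)%:C.
Proof.
rewrite mxtrace_siteprod rmorph_prod; apply: eq_bigr => i _.
by rewrite mxtrace_siteproj; case: (f i); rewrite ?rmorphB /= ?rmorph_nat.
Qed.

Lemma siteprod_expand (c : 'I_N.+1 -> bool -> C) :
  siteprod (fun i => \sum_(b : bool) c i b *: siteproj b) =
  \sum_(f : pattern) (\prod_i c i (f i)) *: patproj f.
Proof.
apply/matrixP => x y; rewrite siteprodE summxE.
under eq_bigr => i _ do rewrite summxE.
under eq_bigr => i _ do under eq_bigr => b _ do rewrite mxE.
rewrite bigA_distr_bigA /=; apply: eq_bigr => f _.
by rewrite mxE siteprodE -big_split.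
Qed.

Lemma sum_patproj : \sum_(f : pattern) patproj f = 1%:M.
Proof.
rewrite -siteprod1 (@eq_siteprod _ (fun i => \sum_b 1 *: siteproj b)) ?siteprod_expand.
  by apply: eq_bigr => f _; rewrite prodr_const expr1n scale1r.
by move=> i; rewrite -siteprojE !scale1r /= addrC subrK.
Qed.

Definition pweight rho f : C := \tr (patproj f *m rho).

Lemma mxtrace_sum_patproj (a : pattern -> C) rho :
  \tr ((\sum_(f : pattern) a f *: patproj f) *m rho) = \sum_(f : pattern) a f * pweight rho f.
Proof.
rewrite mulmx_suml raddf_sum; apply: eq_bigr => f _.
by rewrite -scalemxAl; apply: mxtraceZ.
Qed.

Lemma sum_pweight rho : \sum_(f : pattern) pweight rho f = \tr rho.
Proof.
have := mxtrace_sum_patproj (fun _ => 1) rho.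
under eq_bigr => f _ do rewrite scale1r.
by rewrite sum_patproj mul1mx => ->; apply: eq_bigr => f _; rewrite mul1r.
Qed.

Lemma pweight_ge0 rho f : psd rho -> 0 <= pweight rho f.
Proof.
move=> psd_rho; rewrite /pweight -patproj_idem -mulmxA mxtrace_mulC -{1}adj_patproj.
exact: psd_mxtrace_conj.
Qed.

Lemma pweight_perm rho s f :
  perm_invariant rho -> pweight rho [ffun i => f (s i)] = pweight rho f.
Proof.
move=> inv_rho; pose t := (s^-1)%g; rewrite /pweight.
have -> : patproj [ffun i => f (s i)] = (perm_op t)^T *m patproj f *m perm_op t.
  by rewrite perm_op_conj_siteprod /patproj; apply: eq_siteprod => i; rewrite ffunE invgK.
rewrite -!mulmxA mxtrace_mulC -!mulmxA [perm_op t *m (rho *m _)]mulmxA inv_rho.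
by rewrite -mulmxA perm_op_trmx mulmx1.
Qed.

Lemma widen_ord_max_neq m (i : 'I_m) : widen_ord (leqnSn m) i != ord_max.
Proof. by rewrite -val_eqE /= neq_ltn ltn_ord. Qed.

Lemma sum_last_site lam rho (k : pattern -> C) (G : nat -> C) :
  perm_invariant rho ->
  (forall f, lam * k f = lam ^+ (nperp f).+1 - (f ord_max)%:R * G (nperp f)) ->
  (N.+1%:R * lam) * \sum_(f : pattern) k f * pweight rho f =
  \sum_(f : pattern) (N.+1%:R * lam ^+ (nperp f).+1 - (nperp f)%:R * G (nperp f)) *
                     pweight rho f.
Proof.
move=> inv_rho lam_k; rewrite -mulrA mulr_sumr.
under eq_bigr => f _ do rewrite mulrA lam_k mulrBl.
rewrite sumrB mulrBr (sum_site_symmetric _ _ (fun s f => pweight_perm s f inv_rho)).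
by rewrite mulr_sumr -sumrB; apply: eq_bigr => f _; rewrite mulrBl !mulrA.
Qed.

Lemma p_of_pweight lam rho : perm_invariant rho ->
  (N.+1%:R * lam%:C) * p_of Psi lam rho =
  \sum_(f : pattern) plevel N.+1 lam%:C (nperp f) * pweight rho f.
Proof.
move=> inv_rho; pose c (i : 'I_N.+1) (b : bool) := lam%:C ^+ (b && (i != ord_max)).
have -> : p_of Psi lam rho = \sum_(f : pattern) (\prod_i c i (f i)) * pweight rho f.
  rewrite /p_of ntensmx_siteprod -mxtrace_sum_patproj -siteprod_expand.
  congr (\tr (_ *m _)); apply: eq_siteprod => i; rewrite -siteprojE /c.
  case: (i == ord_max) => /=; first by rewrite !scale1r addrC subrK.
  by rewrite expr0 expr1 scale1r.
under eq_bigr => f _ do rewrite prodrXr.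
rewrite (sum_last_site (G := fun j => lam%:C ^+ j.+1 - lam%:C ^+ j) inv_rho).
  by apply: eq_bigr => f _; rewrite /plevel; congr (_ * _); ring.
move=> f; rewrite -exprS /nperp !(big_ord_recr N) /= eqxx andbF addn0.
under eq_bigr => i _ do rewrite widen_ord_max_neq andbT.
case: (f ord_max); rewrite ?addn1 ?addn0 /=; last by rewrite mul0r subr0.
by rewrite mul1r opprB addrC subrK.
Qed.

Lemma f_of_pweight lam rho : perm_invariant rho ->
  (N.+1%:R * lam%:C) * f_of Psi lam rho =
  \sum_(f : pattern) flevel N.+1 lam%:C (nperp f) * pweight rho f.
Proof.
move=> inv_rho; pose c (i : 'I_N.+1) (b : bool) :=
  if b && (i == ord_max) then 0 else lam%:C ^+ b.
have -> : f_of Psi lam rho = \sum_(f : pattern) (\prod_i c i (f i)) * pweight rho f.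
  rewrite /f_of ntensmx_siteprod -mxtrace_sum_patproj -siteprod_expand.
  congr (\tr (_ *m _)); apply: eq_siteprod => i; rewrite -siteprojE /c.
  case: (i == ord_max) => /=; first by rewrite expr0 scale1r scale0r addr0.
  by rewrite expr0 expr1 scale1r.
rewrite (sum_last_site (G := fun j => lam%:C ^+ j.+1) inv_rho).
  by apply: eq_bigr => f _; rewrite /flevel; congr (_ * _); rewrite mulrBl.
move=> f; rewrite /nperp !(big_ord_recr N) /=.
under eq_bigr => i _ do rewrite /c (negbTE (widen_ord_max_neq i)) andbF.
rewrite prodrXr /c eqxx andbT.
case: (f ord_max) => /=; first by rewrite !mulr0 mul1r subrr.
by rewrite expr0 !mulr1 addn0 mul0r subr0 -exprS.
Qed.

Lemma state_level_distribution lam rho : density rho -> perm_invariant rho ->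
  exists r : pattern -> R, [/\ (forall f, 0 <= r f), \sum_f r f = 1,
    (N.+1%:R * lam%:C) * p_of Psi lam rho = (\sum_f plevel N.+1 lam (nperp f) * r f)%:C &
    (N.+1%:R * lam%:C) * f_of Psi lam rho = (\sum_f flevel N.+1 lam (nperp f) * r f)%:C].
Proof.
move=> [_ [psd_rho tr_rho]] inv_rho.
have wE f : pweight rho f = (complex.Re (pweight rho f))%:C.
  by have := ger0_Im (pweight_ge0 f psd_rho); case: (pweight rho f) => ? ? /= ->.
exists (fun f => complex.Re (pweight rho f)); split.
- by move=> f; rewrite -ler0c -wE pweight_ge0.
- apply: complexI; rewrite rmorph_sum /= rmorph1 -tr_rho -sum_pweight.
  by apply: eq_bigr => f _; rewrite -wE.
- rewrite p_of_pweight // rmorph_sum; apply: eq_bigr => f _ /=.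
  by rewrite rmorphM /= -wE rmorph_plevel.
- rewrite f_of_pweight // rmorph_sum; apply: eq_bigr => f _ /=.
  by rewrite rmorphM /= -wE rmorph_flevel.
Qed.

Definition diagstate (a : pattern -> R) : 'M[C]_(D ^ N * D) :=
  \sum_(f : pattern) (a f)%:C *: patproj f.

Section DiagonalStates.
Variable a : pattern -> R.

Lemma adj_diagstate : adj (diagstate a) = diagstate a.
Proof.
rewrite /diagstate adj_sum; apply: eq_bigr => f _; rewrite adjZ adj_patproj.
by congr (_ *: _); apply/eqP; rewrite eq_complex /= oppr0 !eqxx.
Qed.

Lemma psd_diagstate : (forall f, 0 <= a f) -> psd (diagstate a).
Proof.
move=> a_ge0 v; rewrite /diagstate mulmx_sumr mulmx_suml summxE.
apply: sumr_ge0 => f _; rewrite -scalemxAr -scalemxAl mxE mulr_ge0 ?lecR //.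
rewrite -patproj_idem -{1}adj_patproj !mulmxA -adjM -mulmxA.
exact: adj_mul_self_ge0.
Qed.

Lemma pweight_diagstate g : pweight (diagstate a) g = (a g * ptrace g)%:C.
Proof.
rewrite /pweight /diagstate mulmx_sumr raddf_sum /= (bigD1 g) //= big1 ?addr0.
  by rewrite -scalemxAr mxtraceZ patproj_idem mxtrace_patproj rmorphM.
move=> f ne_fg; rewrite -scalemxAr mxtraceZ patproj_mul eq_sym (negbTE ne_fg).
by rewrite linear0 mulr0.
Qed.

Lemma mxtrace_diagstate : \tr (diagstate a) = (\sum_f a f * ptrace f)%:C.
Proof.
rewrite -sum_pweight rmorph_sum; apply: eq_bigr => f _.
by rewrite pweight_diagstate.
Qed.

Lemma perm_invariant_diagstate :
  (forall s f, a [ffun i => f (s i)] = a f) -> perm_invariant (diagstate a).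
Proof.
move=> a_sym s; rewrite /diagstate mulmx_suml mulmx_sumr.
pose h f : pattern := [ffun i => f ((s^-1)%g i)].
have h_inj : injective h.
  by move=> f g /ffunP eq_fg; apply/ffunP => i; have := eq_fg (s i); rewrite !ffunE permK.
rewrite [LHS](reindex_inj h_inj) /=; apply: eq_bigr => f _.
rewrite -scalemxAr -scalemxAl siteprod_perm_op.
have -> : a (h f) = a f by rewrite -[in RHS](a_sym (s^-1)%g f).
by congr (_ *: (_ *m _)); apply: eq_siteprod => i; rewrite ffunE.
Qed.

End DiagonalStates.

Section LevelMixture.
Hypothesis D_gt1 : (1 < D)%N.

Lemma ptrace_gt0 f : 0 < ptrace f.
Proof. by apply: prodr_gt0 => i _; case: (f i); rewrite // subr_gt0 ltr1n. Qed.

Definition level_trace j : R := \sum_(f : pattern | nperp f == j) ptrace f.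

Lemma level_trace_gt0 j : (j <= N.+1)%N -> 0 < level_trace j.
Proof.
move=> le_jN; pose f0 : pattern := [ffun i : 'I_N.+1 => (i < j)%N].
have nperp_f0 : nperp f0 == j.
  by rewrite -[X in _ == X](sum_ord_lt le_jN); apply/eqP/eq_bigr => i _; rewrite ffunE.
rewrite /level_trace (bigD1 f0) //= ltr_wpDr ?ptrace_gt0 //.
by apply: sumr_ge0 => f _; exact: ltW (ptrace_gt0 f).
Qed.

Variables (j0 : nat) (al : R).
Hypotheses (le_j0N : (j0 <= N)%N) (al01 : 0 <= al <= 1).

Let level_traces_gt0 : 0 < level_trace j0 /\ 0 < level_trace j0.+1.
Proof. by split; apply: level_trace_gt0; rewrite ?ltnS // leqW. Qed.

Definition mixcoef f : R :=
  (if nperp f == j0 then al / level_trace j0 else 0) +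
  (if nperp f == j0.+1 then (1 - al) / level_trace j0.+1 else 0).

Lemma sum_mixcoef (H : nat -> R) :
  \sum_f H (nperp f) * (mixcoef f * ptrace f) = al * H j0 + (1 - al) * H j0.+1.
Proof.
have level_sum j (c : R) :
    \sum_f H (nperp f) * ((if nperp f == j then c else 0) * ptrace f) =
    c * level_trace j * H j.
  rewrite /level_trace big_distrr big_distrl /= [RHS]big_mkcond /=; apply: eq_bigr => f _.
  by case: eqP => [->|_] /=; ring.
have [T0 T1] := level_traces_gt0.
under eq_bigr => f _ do rewrite /mixcoef mulrDl mulrDr.
by rewrite big_split /= !level_sum !divfK ?gt_eqF.
Qed.

Lemma mixcoef_ge0 f : 0 <= mixcoef f.
Proof.
have [T0 T1] := level_traces_gt0.
case/andP: al01 => al0 al1.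
by rewrite addr_ge0 //; case: ifP => _ //; rewrite divr_ge0 ?subr_ge0 // ltW.
Qed.

Lemma mix_state_spec lam :
  [/\ density (diagstate mixcoef), perm_invariant (diagstate mixcoef),
   (N.+1%:R * lam%:C) * p_of Psi lam (diagstate mixcoef) =
     (al * plevel N.+1 lam j0 + (1 - al) * plevel N.+1 lam j0.+1)%:C &
   (N.+1%:R * lam%:C) * f_of Psi lam (diagstate mixcoef) =
     (al * flevel N.+1 lam j0 + (1 - al) * flevel N.+1 lam j0.+1)%:C].
Proof.
have inv : perm_invariant (diagstate mixcoef).
  by apply: perm_invariant_diagstate => s f; rewrite /mixcoef nperp_perm.
have mix_weights (H : nat -> R) (Hc : nat -> C) : (forall k, (H k)%:C = Hc k) ->
    \sum_f Hc (nperp f) * pweight (diagstate mixcoef) f =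
    (al * H j0 + (1 - al) * H j0.+1)%:C.
  move=> eqH; rewrite -sum_mixcoef rmorph_sum; apply: eq_bigr => f _.
  by rewrite pweight_diagstate !rmorphM /= eqH.
split=> //.
- split; first exact: adj_diagstate.
  split; first exact: psd_diagstate mixcoef_ge0.
  rewrite mxtrace_diagstate.
  have := sum_mixcoef (fun _ => 1); under eq_bigr => f _ do rewrite mul1r.
  by move=> ->; rewrite !mulr1 addrC subrK.
- by rewrite p_of_pweight //; apply: mix_weights => k; rewrite rmorph_plevel.
- by rewrite f_of_pweight //; apply: mix_weights => k; rewrite rmorph_flevel.
Qed.

End LevelMixture.
End Patterns.
End Sites.

Section Levels.
Variable R : realType.
Variables (N : nat) (lam : R).
Hypotheses (N_gt0 : (0 < N)%N) (lam_gt0 : 0 < lam) (lam_lt1 : lam < 1).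
Local Notation pl := (plevel N.+1 lam).
Local Notation fl := (flevel N.+1 lam).

Lemma plevel_step j : pl j - pl j.+1 = lam ^+ j * (1 - lam) * (j%:R + (N%:R - j%:R) * lam).
Proof. rewrite /plevel !exprS -!natr1; ring. Qed.

Lemma flevel_step j : fl j - fl j.+1 = lam ^+ j * lam * (1 + (N%:R - j%:R) * (1 - lam)).
Proof. rewrite /flevel !exprS -!natr1; ring. Qed.

Lemma level_step_cross j k :
  (fl j - fl j.+1) * (pl k - pl k.+1) - (fl k - fl k.+1) * (pl j - pl j.+1) =
  lam ^+ j * lam ^+ k * lam * (1 - lam) ^+ 2 * N.+1%:R * (k%:R - j%:R).
Proof. rewrite !plevel_step !flevel_step -natr1; ring. Qed.

Lemma level_denom_gt0 k : (k <= N)%N -> 0 < k%:R + (N%:R - k%:R) * lam.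
Proof.
case: k => [|k] le_kN; first by rewrite add0r subr0 mulr_gt0 ?ltr0n.
by rewrite ltr_wpDr ?mulr_ge0 ?subr_ge0 ?ler_nat ?ltW ?ltr0n.
Qed.

Lemma plevel_decr j : (j <= N)%N -> 0 < pl j - pl j.+1.
Proof.
move=> le_jN; rewrite plevel_step !mulr_gt0 ?exprn_gt0 ?level_denom_gt0 //.
by rewrite subr_gt0.
Qed.

Lemma flevel_decr j : (j <= N)%N -> 0 <= fl j - fl j.+1.
Proof.
move=> le_jN; rewrite flevel_step mulr_ge0 ?mulr_ge0 ?exprn_ge0 ?ltW //.
by rewrite ltr_pwDl // mulr_ge0 // subr_ge0 ?ler_nat // ltW.
Qed.

Lemma plevel_ge0 j : (j <= N.+1)%N -> 0 <= pl j.
Proof.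
move=> le_jN; have Nj_ge0 : 0 <= N.+1%:R - j%:R :> R by rewrite subr_ge0 ler_nat.
by rewrite /plevel addr_ge0 // mulr_ge0 // exprn_ge0 // ltW.
Qed.

Lemma flevel_last : fl N.+1 = 0.
Proof. by rewrite /flevel subrr mul0r. Qed.

Section SupportingLine.
Variable j0 : nat.
Hypothesis le_j0N : (j0 <= N)%N.
(* The chord through the points [(pl j, fl j)], [j = j0, j0 + 1], supports all of them. *)
Let a := pl j0 - pl j0.+1.
Let slope := (fl j0 - fl j0.+1) / a.
Let icpt := fl j0 - slope * pl j0.
Let gap j := fl j - slope * pl j - icpt.

Let a_gt0 : 0 < a. Proof. exact: plevel_decr. Qed.

Let gap_j0 : gap j0 = 0.
Proof. by rewrite /gap /icpt subrr. Qed.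

Let gap_j1 : gap j0.+1 = 0.
Proof.
have := a_gt0; rewrite /gap /icpt /slope /a => a_pos.
by field; rewrite gt_eqF.
Qed.

Let gap_step j : gap j - gap j.+1 =
  lam ^+ j * lam ^+ j0 * lam * (1 - lam) ^+ 2 * N.+1%:R * (j0%:R - j%:R) / a.
Proof.
rewrite -level_step_cross /gap /slope -/a; have := a_gt0 => a_pos.
by field; rewrite gt_eqF.
Qed.

Let gap_step_sign j : 0 <= (gap j - gap j.+1) * (j0%:R - j%:R).
Proof.
rewrite gap_step; set P := lam ^+ j * lam ^+ j0 * lam * (1 - lam) ^+ 2 * N.+1%:R.
set d := j0%:R - j%:R.
have -> : P * d / a * d = P / a * d ^+ 2 by rewrite expr2; ring.
apply: mulr_ge0; last exact: sqr_ge0.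
apply: divr_ge0; last exact: ltW a_gt0.
rewrite /P mulr_ge0 ?ler0n // mulr_ge0 ?sqr_ge0 //.
by rewrite !mulr_ge0 ?exprn_ge0 ?ltW.
Qed.

Let gap_ge0 j : 0 <= gap j.
Proof.
have down m : (m <= j0)%N -> 0 <= gap (j0 - m).
  elim: m => [|m IH] le_mj0; first by rewrite subn0 gap_j0.
  have := gap_step_sign (j0 - m.+1); rewrite subnSK //.
  have : ((j0 - m.+1)%:R < j0%:R :> R) by rewrite ltr_nat -subn_gt0 subKn.
  have := IH (ltnW le_mj0); rewrite -subr_gt0; nra.
have up m : 0 <= gap (j0.+1 + m).
  elim: m => [|m IH]; first by rewrite addn0 gap_j1.
  have := gap_step_sign (j0.+1 + m); rewrite addnS.
  have : (j0%:R < (j0.+1 + m)%:R :> R) by rewrite ltr_nat ltnS leq_addr.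
  rewrite -subr_lt0; nra.
have [le_jj0|lt_j0j] := leqP j j0; first by rewrite -(subKn le_jj0) down ?leq_subr.
by rewrite -(subnKC lt_j0j) up.
Qed.

Let slope_ge0 : 0 <= slope.
Proof. by rewrite divr_ge0 ?flevel_decr // ltW. Qed.

Let icpt_le0 : icpt <= 0.
Proof.
have := gap_ge0 N.+1; rewrite /gap flevel_last.
have := plevel_ge0 (leqnn N.+1); have := slope_ge0; nra.
Qed.

Variable al : R.
Hypothesis al01 : 0 <= al <= 1.

(* With [X0 <= X] the abscissae of the mixture and of [r], and [Y] the ordinate of [r]:
   [Y >= slope X + icpt] and [icpt <= 0] give [Y / X >= slope + icpt / X0]. *)
Lemma mix_ratio_le (I : finType) (r : I -> R) (c : I -> nat) :
  (forall i, 0 <= r i) -> \sum_i r i = 1 ->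
  al * pl j0 + (1 - al) * pl j0.+1 <= \sum_i pl (c i) * r i ->
  (al * fl j0 + (1 - al) * fl j0.+1) * (\sum_i pl (c i) * r i) <=
  (al * pl j0 + (1 - al) * pl j0.+1) * (\sum_i fl (c i) * r i).
Proof.
move=> r_ge0 r_sum.
set X := \sum_i pl (c i) * r i; set Y := \sum_i fl (c i) * r i.
set X0 := al * pl j0 + (1 - al) * pl j0.+1 => le_X0X.
have Y_ge : slope * X + icpt <= Y.
  rewrite /X /Y mulr_sumr -[icpt]mul1r -r_sum mulr_suml -big_split /=.
  by apply: ler_sum => i _; have := gap_ge0 (c i); have := r_ge0 i; rewrite /gap; nra.
have Y0E : al * fl j0 + (1 - al) * fl j0.+1 = slope * X0 + icpt.
  by have := gap_j0; have := gap_j1; rewrite /gap /X0; nra.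
have X0_ge0 : 0 <= X0.
  case/andP: al01 => al0 al1; rewrite /X0 addr_ge0 // mulr_ge0 ?subr_ge0 //;
  by rewrite plevel_ge0 // ?(leqW le_j0N) ?ltnS.
have : 0 <= X0 * (Y - (slope * X + icpt)) by rewrite mulr_ge0 // subr_ge0.
have : 0 <= - icpt * (X - X0) by rewrite mulr_ge0 ?oppr_ge0 ?subr_ge0.
by rewrite Y0E; nra.
Qed.

End SupportingLine.

Lemma discrete_ivt (u : nat -> R) (x : R) m : u m.+1 <= x <= u 0%N ->
  exists2 j, (j <= m)%N & u j.+1 <= x <= u j.
Proof.
elim: m => [|m IH] /andP [le_um le_u0]; first by exists 0%N => //; rewrite le_um le_u0.
have [le_xu|lt_ux] := lerP x (u m.+1); first by exists m.+1 => //; rewrite le_um le_xu.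
have [j le_jm le_x] : exists2 j, (j <= m)%N & u j.+1 <= x <= u j.
  by apply: IH; rewrite (ltW lt_ux) le_u0.
by exists j => //; rewrite (leq_trans le_jm).
Qed.

Lemma plevel_mix_exists (x : R) : pl N.+1 <= x <= pl 0%N ->
  exists j0 al, [/\ (j0 <= N)%N, 0 <= al <= 1 & x = al * pl j0 + (1 - al) * pl j0.+1].
Proof.
move=> x_range; have [j le_jN /andP [ge_x le_x]] := discrete_ivt x_range.
have a_gt0 := plevel_decr le_jN.
exists j, ((x - pl j.+1) / (pl j - pl j.+1)); split => //; last first.
  by field; rewrite gt_eqF.
apply/andP; split; first by apply: divr_ge0; [rewrite subr_ge0 | exact: ltW].
by rewrite ler_pdivrMr // mul1r lerD2r.
Qed.

(* The mixture of levels [k] and [k + 1] with weight [mixweight k] has [p = lam ^ k]. *)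
Definition mixweight k : R := lam * (N%:R - k%:R) / (k%:R + (N%:R - k%:R) * lam).
Definition level_ratio k : R := (N%:R - k%:R) * lam / (k%:R + (N%:R - k%:R) * lam).

Lemma mixweight01 k : (k <= N)%N -> 0 <= mixweight k <= 1.
Proof.
move=> le_kN; have den_gt0 := level_denom_gt0 le_kN.
have Nk_ge0 : 0 <= N%:R - k%:R :> R by rewrite subr_ge0 ler_nat.
apply/andP; split; first by rewrite divr_ge0 ?mulr_ge0 // ltW.
by rewrite ler_pdivrMr // mul1r mulrC lerDr.
Qed.

Lemma mixweight_plevel k : (k <= N)%N ->
  mixweight k * pl k + (1 - mixweight k) * pl k.+1 = N.+1%:R * lam * lam ^+ k.
Proof.
move=> le_kN; have den_gt0 := level_denom_gt0 le_kN.
rewrite /mixweight /plevel !exprS -!natr1; field; rewrite gt_eqF //.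
Qed.

Lemma mixweight_flevel k : (k <= N)%N ->
  mixweight k * fl k + (1 - mixweight k) * fl k.+1 =
  N.+1%:R * lam * lam ^+ k * level_ratio k.
Proof.
move=> le_kN; have den_gt0 := level_denom_gt0 le_kN.
rewrite /mixweight /level_ratio /flevel !exprS -!natr1; field; rewrite gt_eqF //.
Qed.

End Levels.

Lemma unscale_realC (R : realType) (K Z : R) (z : R[i]) :
  K != 0 -> K%:C * z = Z%:C -> z = (Z / K)%:C.
Proof.
move=> K_neq0 Kz; have KC_neq0 : K%:C != 0 by rewrite eq_complex /= negb_and K_neq0.
by apply: (mulfI KC_neq0); rewrite Kz -rmorphM mulrC divfK.
Qed.

Lemma ratio_realC (R : realType) (K X Y : R) :
  K != 0 -> X != 0 -> (Y / K)%:C / (X / K)%:C = (Y / X)%:C.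
Proof. by move=> K_neq0 X_neq0; rewrite -fmorph_div; congr (_%:C); field; rewrite X_neq0. Qed.

Section Optimum.
Variable R : realType.
Local Notation C := R[i].
Variable D : nat.
Hypothesis D_gt1 : (1 < D)%N.
Variable n : nat.
Local Notation N := n.+1.
Variable Psi : 'cV[C]_D.
Hypothesis Psi_unit : adj Psi *m Psi = 1.
Variable lam : R.
Hypotheses (lam_gt0 : 0 < lam) (lam_lt1 : lam < 1).
Local Notation pl := (plevel N.+1 lam).
Local Notation fl := (flevel N.+1 lam).
Local Notation K := (N.+1%:R * lam).

Let D_gt0 : (0 < D)%N. Proof. exact: ltnW. Qed.
Let N_gt0 : (0 < N)%N. Proof. exact: ltn0Sn. Qed.
Let K_gt0 : 0 < K. Proof. by rewrite mulr_gt0 ?ltr0n. Qed.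
Let K_neq0 : K != 0. Proof. exact: lt0r_neq0. Qed.
Let KC : N.+1%:R * lam%:C = K%:C. Proof. by rewrite rmorphM rmorph_nat. Qed.

Section Mixture.
Variables (j0 : nat) (al dl : R).
Hypotheses (le_j0N : (j0 <= N)%N) (al01 : 0 <= al <= 1) (dl_gt0 : 0 < dl).
Hypothesis mixE : K * dl = al * pl j0 + (1 - al) * pl j0.+1.

Lemma mix_ratio_le_feasible (rho : 'M[C]_(D ^ N * D)) : feasible Psi dl lam rho ->
  ((al * fl j0 + (1 - al) * fl j0.+1) / (K * dl))%:C <= f_of Psi lam rho / p_of Psi lam rho.
Proof.
move=> [rho_density [rho_inv p_ge]].
have [r [r_ge0 r_sum Kp Kf]] :=
  state_level_distribution D_gt0 Psi_unit lam rho_density rho_inv.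
rewrite KC in Kp Kf.
set X := \sum_f _ in Kp; set Y := \sum_f _ in Kf.
rewrite (unscale_realC K_neq0 Kp) lecR ler_pdivlMr // mulrC in p_ge.
have X_gt0 : 0 < X by apply: lt_le_trans p_ge; rewrite mulr_gt0.
rewrite (unscale_realC K_neq0 Kp) (unscale_realC K_neq0 Kf).
rewrite ratio_realC ?gt_eqF //.
rewrite lecR ler_pdivrMr ?mulr_gt0 // mulrAC ler_pdivlMr //.
rewrite [X in _ <= X]mulrC mixE.
by apply: mix_ratio_le; rewrite // -mixE.
Qed.

Lemma mix_state_exists : exists rho : 'M[C]_(D ^ N * D), [/\ density rho, perm_invariant rho,
  p_of Psi lam rho = dl%:C &
  f_of Psi lam rho / p_of Psi lam rho = ((al * fl j0 + (1 - al) * fl j0.+1) / (K * dl))%:C].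
Proof.
have [rho_density rho_inv Kp Kf] := mix_state_spec D_gt0 Psi_unit D_gt1 le_j0N al01 lam.
rewrite KC -mixE in Kp; rewrite KC in Kf.
exists (diagstate Psi (mixcoef D j0 al)); split=> //.
  by rewrite (unscale_realC K_neq0 Kp) mulrC mulKf ?gt_eqF.
rewrite (unscale_realC K_neq0 Kp) (unscale_realC K_neq0 Kf).
by rewrite ratio_realC ?gt_eqF ?mulr_gt0.
Qed.

End Mixture.

Lemma mix_level k : (k <= N)%N ->
  K * lam ^+ k = mixweight N lam k * pl k + (1 - mixweight N lam k) * pl k.+1.
Proof. by move=> le_kN; rewrite mixweight_plevel. Qed.

Lemma mix_level_ratio k : (k <= N)%N ->
  (mixweight N lam k * fl k + (1 - mixweight N lam k) * fl k.+1) / (K * lam ^+ k) =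
  level_ratio N lam k.
Proof.
by move=> le_kN; rewrite mixweight_flevel // mulrC mulKf // mulf_neq0 // expf_neq0 ?gt_eqF.
Qed.

Lemma is_F_exists delta : lam ^+ N <= delta <= 1 -> exists x, is_F N Psi delta lam x.
Proof.
case/andP => lamN_le delta_le1.
have delta_gt0 : 0 < delta := lt_le_trans (exprn_gt0 N lam_gt0) lamN_le.
have /plevel_mix_exists : pl N.+1 <= K * delta <= pl 0.
  rewrite /plevel subrr mul0r add0r subr0 mul0r addr0 expr1.
  apply/andP; split; last by rewrite -[X in _ <= X]mulr1 ler_wpM2l // ltW.
  by rewrite exprS mulrA ler_wpM2l // ltW.
case=> // j0 [al [le_j0N al01 mixE]].
have [rho [rho_density rho_inv pE ratioE]] := mix_state_exists le_j0N al01 delta_gt0 mixE.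
exists (f_of Psi lam rho / p_of Psi lam rho); split.
  by exists rho; do !split=> //; rewrite pE.
by move=> rho' /(mix_ratio_le_feasible le_j0N al01 delta_gt0 mixE); rewrite ratioE.
Qed.

Lemma is_F_ge_level_ratio delta x k : (k <= N)%N -> lam ^+ k <= delta ->
  is_F N Psi delta lam x -> (level_ratio N lam k)%:C <= x.
Proof.
move=> le_kN lam_k_le [[rho [[rho_density [rho_inv p_ge]] <-]] _].
rewrite -(mix_level_ratio le_kN).
apply: (mix_ratio_le_feasible le_kN (mixweight01 N_gt0 lam_gt0 le_kN) (exprn_gt0 k lam_gt0)).
  exact: mix_level.
by do !split=> //; apply: le_trans p_ge; rewrite lecR.
Qed.

Lemma is_F_le_level_ratio delta x k : (k <= N)%N -> delta <= lam ^+ k ->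
  is_F N Psi delta lam x -> x <= (level_ratio N lam k)%:C.
Proof.
move=> le_kN le_lam_k [_ x_min].
have [rho [rho_density rho_inv pE ratioE]] := mix_state_exists le_kN
  (mixweight01 N_gt0 lam_gt0 le_kN) (exprn_gt0 k lam_gt0) (mix_level le_kN).
rewrite -(mix_level_ratio le_kN) -ratioE; apply: x_min.
by do !split=> //; rewrite pE lecR.
Qed.

End Optimum.

Section Logarithms.
Variable R : realType.
Variables (N : nat) (lam delta : R).
Hypotheses (lam_gt0 : 0 < lam) (lam_lt1 : lam < 1).
Hypothesis delta_range : lam ^+ N <= delta <= 1.

Let delta_gt0 : 0 < delta.
Proof.
by case/andP: delta_range => le_delta _; exact: lt_le_trans (exprn_gt0 _ lam_gt0) le_delta.
Qed.
Let ln_lam_lt0 : ln lam < 0. Proof. by apply: ln_lt0; rewrite lam_gt0 lam_lt1. Qed.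
Let r := ln delta / ln lam.
Let r_ln_lam : r * ln lam = ln delta. Proof. by rewrite /r divfK // lt_eqF. Qed.

Let r_ge0 : 0 <= r.
Proof.
have := ln_le0 (proj2 (andP delta_range)); have := r_ln_lam; have := ln_lam_lt0; nra.
Qed.

Let r_leN : r <= N%:R.
Proof.
have : N%:R * ln lam <= ln delta.
  by rewrite mulr_natl -lnXn // ler_ln ?posrE ?exprn_gt0 //; case/andP: delta_range.
have := r_ln_lam; have := ln_lam_lt0; nra.
Qed.

Let lam_exp_le k : r <= k%:R -> lam ^+ k <= delta.
Proof.
move=> le_rk; rewrite -ler_ln ?posrE ?exprn_gt0 // lnXn // -mulr_natr -r_ln_lam.
have := ln_lam_lt0; nra.
Qed.

Let le_lam_exp k : k%:R <= r -> delta <= lam ^+ k.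
Proof.
move=> le_kr; rewrite -ler_ln ?posrE ?exprn_gt0 // lnXn // -mulr_natr -r_ln_lam.
have := ln_lam_lt0; nra.
Qed.

Lemma ceil_log_nat : exists k : nat,
  [/\ Num.ceil (ln delta / ln lam) = k%:Z, (k <= N)%N & lam ^+ k <= delta].
Proof.
have ceil_ge0 : 0 <= Num.ceil r by rewrite ceil_ge0 (lt_le_trans _ r_ge0) // ltrN10.
exists `|Num.ceil r|%N; rewrite gez0_abs //; split => //.
  by rewrite -lez_nat gez0_abs // ceil_le_int.
by apply: lam_exp_le; rewrite -[_%:R]/((`|Num.ceil r|%N)%:~R) gez0_abs // ceil_ge.
Qed.

Lemma floor_log_nat : exists k : nat,
  [/\ Num.floor (ln delta / ln lam) = k%:Z, (k <= N)%N & delta <= lam ^+ k].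
Proof.
have floor_ge0 : 0 <= Num.floor r by rewrite floor_ge0.
exists `|Num.floor r|%N; rewrite gez0_abs //; split => //.
  rewrite -lez_nat gez0_abs // -(ler_int R); apply: le_trans (floor_le _) _; exact: r_leN.
by apply: le_lam_exp; rewrite -[_%:R]/((`|Num.floor r|%N)%:~R) gez0_abs // floor_le.
Qed.

End Logarithms.

Theorem corollary3 (R : realType) (D N : nat) (Psi : 'cV[R[i]]_D) (lam delta : R) :
  (2 <= D)%N -> (1 <= N)%N ->
  adj Psi *m Psi = 1 ->
  0 < lam < 1 -> lam ^+ N <= delta <= 1 ->
  let kp := Num.ceil (ln delta / ln lam) in
  let km := Num.floor (ln delta / ln lam) in
  exists F : R[i], is_F N Psi delta lam F /\
    ((((N%:R - kp%:~R) * lam) / (kp%:~R + (N%:R - kp%:~R) * lam))%:C <= F) /\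
    (F <= (((N%:R - km%:~R) * lam) / (km%:~R + (N%:R - km%:~R) * lam))%:C).
Proof.
case: N => [//|n] D_gt1 _ Psi_unit /andP[lam_gt0 lam_lt1] delta_range kp km.
have [k1 [kp_k1 le_k1 lam_k1]] := ceil_log_nat lam_gt0 lam_lt1 delta_range.
have [k2 [km_k2 le_k2 lam_k2]] := floor_log_nat lam_gt0 lam_lt1 delta_range.
have [F F_opt] := is_F_exists D_gt1 Psi_unit lam_gt0 lam_lt1 delta_range.
exists F; split=> //; rewrite /kp /km kp_k1 km_k2 -!pmulrn; split.
- exact (is_F_ge_level_ratio D_gt1 Psi_unit lam_gt0 lam_lt1 le_k1 lam_k1 F_opt).
- exact (is_F_le_level_ratio D_gt1 Psi_unit lam_gt0 le_k2 lam_k2 F_opt).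
Qed.
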